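(* Let $\sigma$ be a completely erasing $k$-block substitution that satisfies the optimality condition. Let $w\in\{0,1\}^*$, $h\in\mathbb N$ and $p=\sigma^h(w)\in\{0,1\}^*$. Then for every $u\in\{0,1\}^\omega$ there is $v\in\{0,1\}^\omega$ such that $\sigma^h(wv)=pu$.
   Context: Binary words: $\{0,1\}^*$ and $\{0,1\}^\omega$ denote finite and infinite binary words, and $\epsilon$ is the empty word. Fix $k\ge2$. An erasing $k$-block substitution is a map $\sigma:\{0,1\}^k\to\{0,1\}^*$ with exactly one block $w_\epsilon$ such that $\sigma(w_\epsilon)=\epsilon$. $\sigma$ is alternating if there are $\sigma_1,\dots,\sigma_k:\{0,1\}\to\{0,1\}^*$ with $\sigma(b_1\cdots b_k)=\sigma_1(b_1)\cdots\sigma_k(b_k)$. It is then extended to all finite or infinite words by $\sigma(u)=\prod_j\sigma_{((j-1)\bmod k)+1}(u_j)$, and iterates $\sigma^h$ are computed with this extension. $\sigma$ is completely erasing if it is erasing and alternating, and every $w\in\{0,1\}^*$ satisfies $\sigma^n(w)=\epsilon$ for some $n\in\mathbb N$. Optimality condition: every $w\in\{0,1\}^\omega$ can be written as $w=\prod_{i\ge1}\sigma(b_i)$ with blocks $b_i\in\{0,1\}^k$ satisfying $\sigma(b_i)\ne\epsilon$. *)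

(* Binary words: finite = seq bool, infinite = nat -> bool. *)
From mathcomp Require Import all_boot.
Set Implicit Arguments. Unset Strict Implicit. Unset Printing Implicit Defensive.

(* An alternating k-block substitution is given by sig : nat -> bool -> seq bool,
   where sig i (0-indexed, i < k) plays the role of sigma_{i+1}.
   Only the values sig 0, ..., sig (k-1) are ever used. *)

Definition block_img (k : nat) (sig : nat -> bool -> seq bool) (b : seq bool) : seq bool :=
  flatten [seq sig i (nth false b i) | i <- iota 0 k].

Definition sig_fin (k : nat) (sig : nat -> bool -> seq bool) (u : seq bool) : seq bool :=
  flatten [seq sig (j %% k) (nth false u j) | j <- iota 0 (size u)].

Inductive word : Type :=
  | Fin of seq bool
  | Inf of (nat -> bool).

Definition prefix_inf (s : seq bool) (y : nat -> bool) : Prop :=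
  forall i, i < size s -> nth false s i = y i.

Definition cat_inf (p : seq bool) (u : nat -> bool) : nat -> bool :=
  fun n => if n < size p then nth false p n else u (n - size p).

Definition sig_pref (k : nat) (sig : nat -> bool -> seq bool) (x : nat -> bool) (n : nat)
  : seq bool :=
  flatten [seq sig (j %% k) (x j) | j <- iota 0 n].

(* For infinite x
   the infinite product of the images of its letters is the infinite word whose
   prefixes are all the partial products when these are unbounded in length,
   and the (eventually constant) finite partial product otherwise. *)
Definition sig_img (k : nat) (sig : nat -> bool -> seq bool) (x y : word) : Prop :=
  match x, y with
  | Fin s, Fin t => t = sig_fin k sig s
  | Fin _, Inf _ => False
  | Inf x, Inf y => (forall n, prefix_inf (sig_pref k sig x n) y) /\
                    (forall m, exists n, m <= size (sig_pref k sig x n))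
  | Inf x, Fin t => exists N, forall n, N <= n -> sig_pref k sig x n = t
  end.

Fixpoint sig_iter (k : nat) (sig : nat -> bool -> seq bool) (h : nat) (x y : word) : Prop :=
  match h with
  | 0 => x = y
  | h'.+1 => exists z, sig_img k sig x z /\ sig_iter k sig h' z y
  end.

Definition erasing (k : nat) (sig : nat -> bool -> seq bool) : Prop :=
  exists we : seq bool,
    (size we = k /\ block_img k sig we = [::]) /\
    (forall b, size b = k -> block_img k sig b = [::] -> b = we).

(* Completely erasing (alternating is built into the representation). *)
Definition completely_erasing (k : nat) (sig : nat -> bool -> seq bool) : Prop :=
  erasing k sig /\ forall w : seq bool, exists n, iter n (sig_fin k sig) w = [::].

Definition optimal (k : nat) (sig : nat -> bool -> seq bool) : Prop :=
  forall w : nat -> bool, exists b : nat -> seq bool,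
    (forall i, size (b i) = k /\ block_img k sig (b i) <> [::]) /\
    (forall n, prefix_inf (flatten [seq block_img k sig (b i) | i <- iota 0 n]) w).

From mathcomp Require Import all_boot.
From mathcomp Require Import zify.

Set Implicit Arguments.
Unset Strict Implicit.
Unset Printing Implicit Defensive.

(* Proof of Lemma 4.5.  By induction on h it suffices to treat one application
   of sigma: for every finite w and infinite u there is an infinite v with
   sigma(w v) = sigma(w) u  (lemma [one_step]).  The word v is built in two
   parts.  First, v starts with the suffix c of the erasing block w_eps that
   completes the last, incomplete k-block of w; as sigma_i(w_eps[i]) is empty
   for each i, c contributes nothing and w c has length divisible by k.  Then
   v continues with blocks b_0 b_1 ... given by optimality for u; since w c is
   aligned on a block boundary, each b_i is read with the functions sigma_1, ...,
   sigma_k and contributes its nonempty image sigma(b_i).  Hence the prefixes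
   of sigma(w v) at the block boundaries are sigma(w) sigma(b_0) ... sigma(b_m),
   which are prefixes of sigma(w) u of unbounded length. *)

Lemma flatten_map_nil (T : eqType) (f : T -> seq bool) (s : seq T) :
  flatten (map f s) = [::] <-> forall j, j \in s -> f j = [::].
Proof.
elim: s => [|a s IH] /=; first by split.
split => [| all_nil].
- case Ha: (f a) => [|//] /IH {}IH j.
  by rewrite inE => /orP[/eqP -> | /IH].
- rewrite all_nil ?mem_head //; apply/IH => j sj.
  by apply: all_nil; rewrite inE sj orbT.
Qed.

Lemma size_flatten_nonempty (f : nat -> seq bool) m :
  (forall i, f i <> [::]) -> m <= size (flatten [seq f i | i <- iota 0 m]).
Proof.
move=> nonempty; elim: m => [|m IH] //.
rewrite -addn1 iotaD map_cat flatten_cat size_cat /= cats0 add0n.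
have : size (f m) != 0 by rewrite size_eq0; apply/eqP.
lia.
Qed.

Lemma iota_shift n m : iota n m = [seq n + i | i <- iota 0 m].
Proof. by rewrite -iotaDl addn0. Qed.

Lemma prefix_inf_cat (s t : seq bool) (y : nat -> bool) :
  prefix_inf (s ++ t) y -> prefix_inf s y.
Proof.
move=> pre i hi; rewrite -pre ?size_cat; last by lia.
by rewrite nth_cat hi.
Qed.

Lemma prefix_inf_cat_inf (p s : seq bool) (u : nat -> bool) :
  prefix_inf s u -> prefix_inf (p ++ s) (cat_inf p u).
Proof.
move=> pre i hi; rewrite /cat_inf nth_cat; case: ifP => // hp.
rewrite pre //; rewrite size_cat in hi; move/negbT: hp; lia.
Qed.

Lemma cat_inf_cat (s t : seq bool) (y : nat -> bool) n :
  cat_inf s (cat_inf t y) n = cat_inf (s ++ t) y n.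
Proof.
rewrite /cat_inf size_cat nth_cat.
case: ltnP => hs; first by rewrite ltn_addr.
by rewrite ltn_subLR // subnDA.
Qed.

Definition blocks (k : nat) (B : nat -> seq bool) : nat -> bool :=
  fun n => nth false (B (n %/ k)) (n %% k).

Section PartialImages.

Variables (k : nat) (sig : nat -> bool -> seq bool).

Lemma erasing_letter (we : seq bool) i :
  block_img k sig we = [::] -> i < k -> sig i (nth false we i) = [::].
Proof.
move=> erase ik.
by move/flatten_map_nil: erase; apply; rewrite mem_iota.
Qed.

Lemma sig_pref_ext (x y : nat -> bool) n :
  (forall j, x j = y j) -> sig_pref k sig x n = sig_pref k sig y n.
Proof. by move=> xy; rewrite /sig_pref; congr flatten; apply: eq_map => j; rewrite xy. Qed.

Lemma sig_pref_add (x : nat -> bool) n m : sig_pref k sig x (n + m) =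
  sig_pref k sig x n ++ flatten [seq sig (j %% k) (x j) | j <- iota n m].
Proof. by rewrite /sig_pref iotaD map_cat flatten_cat. Qed.

Lemma prefix_sig_pref (x y : nat -> bool) n m : n <= m ->
  prefix_inf (sig_pref k sig x m) y -> prefix_inf (sig_pref k sig x n) y.
Proof. by move=> nm; rewrite -(subnKC nm) sig_pref_add => /prefix_inf_cat. Qed.

Lemma sig_fin_cat (s t : seq bool) : sig_fin k sig (s ++ t) =
  sig_fin k sig s ++
  flatten [seq sig ((size s + j) %% k) (nth false t j) | j <- iota 0 (size t)].
Proof.
rewrite /sig_fin size_cat iotaD map_cat flatten_cat.
congr (flatten _ ++ _).
  apply/eq_in_map => j; rewrite mem_iota add0n => /andP[_ hj].
  by rewrite nth_cat hj.
rewrite iota_shift -map_comp; congr flatten; apply: eq_map => j /=.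
by rewrite nth_cat ltnNge leq_addr /= addKn.
Qed.

Lemma sig_pref_cat_inf (p : seq bool) (y : nat -> bool) n :
  sig_pref k sig (cat_inf p y) (size p + n) =
  sig_fin k sig p ++ flatten [seq sig ((size p + j) %% k) (y j) | j <- iota 0 n].
Proof.
rewrite sig_pref_add; congr (_ ++ _).
  rewrite /sig_pref /sig_fin; congr flatten; apply/eq_in_map => j.
  by rewrite mem_iota add0n => /andP[_ hj]; rewrite /cat_inf hj.
rewrite iota_shift -map_comp; congr flatten; apply: eq_map => j /=.
by rewrite /cat_inf ltnNge leq_addr /= addKn.
Qed.

Lemma sig_pref_aligned (p : seq bool) (y : nat -> bool) n : size p %% k = 0 ->
  sig_pref k sig (cat_inf p y) (size p + n) = sig_fin k sig p ++ sig_pref k sig y n.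
Proof.
move=> aligned; rewrite sig_pref_cat_inf /sig_pref; congr (_ ++ flatten _).
by apply: eq_map => j; rewrite -modnDml aligned.
Qed.

(* Completing a word s by the tail of the erasing block, from position
   |s| mod k on, does not change its image: those letters are erased. *)
Lemma sig_fin_erasing_tail (s we : seq bool) :
  size we = k -> block_img k sig we = [::] ->
  sig_fin k sig (s ++ drop (size s %% k) we) = sig_fin k sig s.
Proof.
move=> swe erase; rewrite sig_fin_cat.
set r := size s %% k.
rewrite (_ : flatten _ = [::]) ?cats0 //.
apply/flatten_map_nil => j; rewrite mem_iota size_drop swe add0n => /andP[_ hj].
have rj : r + j < k by lia.
by rewrite /= nth_drop -modnDml -/r modn_small // erasing_letter.
Qed.

Lemma erasing_tail_aligned (s we : seq bool) : 0 < k -> size we = k ->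
  size (s ++ drop (size s %% k) we) %% k = 0.
Proof.
move=> k0 swe; rewrite size_cat size_drop swe.
have rk : size s %% k < k by rewrite ltn_mod.
rewrite {1}(divn_eq (size s) k) -addnA (subnKC (ltnW rk)).
by rewrite -mulSnr modnMl.
Qed.

Lemma sig_pref_blocks (B : nat -> seq bool) m : 0 < k ->
  sig_pref k sig (blocks k B) (m * k) =
  flatten [seq block_img k sig (B i) | i <- iota 0 m].
Proof.
move=> k0; elim: m => [|m IH] //.
rewrite mulSnr sig_pref_add IH -addn1 iotaD map_cat flatten_cat /= cats0.
congr (_ ++ _); rewrite /block_img iota_shift -map_comp.
congr flatten; apply/eq_in_map => j; rewrite mem_iota add0n => /andP[_ hj] /=.
by rewrite /blocks modnMDl divnMDl // divn_small // addn0 modn_small.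
Qed.

Lemma one_step (we : seq bool) : 0 < k -> size we = k ->
  block_img k sig we = [::] -> optimal k sig ->
  forall (w : seq bool) (u : nat -> bool), exists v : nat -> bool,
    sig_img k sig (Inf (cat_inf w v)) (Inf (cat_inf (sig_fin k sig w) u)).
Proof.
move=> k0 swe erase opt w u.
have [B [HB HBu]] := opt u.
set c := drop (size w %% k) we.
exists (cat_inf c (blocks k B)).
set x := cat_inf w _.
set L := size (w ++ c).
have image_at_boundary m : sig_pref k sig x (L + m * k) =
    sig_fin k sig w ++ flatten [seq block_img k sig (B i) | i <- iota 0 m].
  rewrite (sig_pref_ext _ (cat_inf_cat w c _)) sig_pref_aligned.
    by rewrite sig_fin_erasing_tail // sig_pref_blocks.
  exact: erasing_tail_aligned.
split => [n | m].
- apply: (@prefix_sig_pref _ _ n (L + n * k)).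
    by rewrite (leq_trans (leq_pmulr n k0)) // leq_addl.
  by rewrite image_at_boundary; apply: prefix_inf_cat_inf.
- exists (L + m * k); rewrite image_at_boundary size_cat.
  apply: leq_trans (leq_addl _ _); apply: size_flatten_nonempty => i.
  by case: (HB i).
Qed.

End PartialImages.

Theorem lemma4p5 (k : nat) (sig : nat -> bool -> seq bool) :
  2 <= k ->
  completely_erasing k sig ->
  optimal k sig ->
  forall (w : seq bool) (h : nat) (p : seq bool),
    p = iter h (sig_fin k sig) w ->
    forall u : nat -> bool, exists v : nat -> bool,
      sig_iter k sig h (Inf (cat_inf w v)) (Inf (cat_inf p u)).
Proof.
move=> k2 [[we [[swe erase] _]] _] opt w h p ->.
have k0 : 0 < k by apply: leq_trans k2.
elim: h w => [|h IH] w u; first by exists u.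
have [v' Hv'] := IH (sig_fin k sig w) u.
have [v Hv] := one_step k0 swe erase opt w v'.
exists v; rewrite iterSr /=.
by exists (Inf (cat_inf (sig_fin k sig w) v')).
Qed.
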